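(* Let $\mathbb{K}$ have characteristic $p>2$ and let $m\ge2$ be even. Let $K^{2,m}$ be the Lie superalgebra with basis $x_0,x_1\,|\,y_1,\dots,y_m$ (even $|$ odd) and nonzero brackets $[x_0,y_i]=-[y_i,x_0]=y_{i+1}$ for $1\le i\le m-1$ and $[y_i,y_{m-i}]=[y_{m-i},y_i]=(-1)^{(m-2i)/2}x_1$ for $1\le i\le m/2$. Then $K^{2,m}$ admits a $p|2p$-structure if and only if $m\le p$, and in that case the $p|2p$-structures are exactly those given by $x_0^{[p]}=s_1x_1$, $x_1^{[p]}=s_2x_1$ with $s_1,s_2\in\mathbb{K}$.
   Context: A $p|2p$-structure on a Lie superalgebra $L$ over a field of characteristic $p>2$ is a map $x\mapsto x^{[p]}$, $L_{\bar0}\to L_{\bar0}$, with $(\lambda x)^{[p]}=\lambda^px^{[p]}$, $(x+y)^{[p]}=x^{[p]}+y^{[p]}+\sum_{i=1}^{p-1}s_i(x,y)$ (where $i s_i(x,y)$ is the coefficient of $\lambda^{i-1}$ in $(\mathrm{ad}_{\lambda x+y})^{p-1}(x)$), and $\mathrm{ad}_{x^{[p]}}(y)=(\mathrm{ad}_x)^p(y)$ for all $x\in L_{\bar0}$, $y\in L$. *)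

From HB Require Import structures.
From mathcomp Require Import all_boot all_order all_algebra.
Set Implicit Arguments. Unset Strict Implicit. Unset Printing Implicit Defensive.
Import GRing.Theory.
Local Open Scope ring_scope.

(* The superalgebra is given by a K-vector space V, a (bilinear) bracket br
   and a predicate [even] describing the even part L_0.                   *)

Section P2P.
Variables (K : fieldType) (V : lmodType K) (br : V -> V -> V).

(* For a word w in {x,y}^(p-1) (true = x, false = y) the term
   ad_{w_1} ... ad_{w_(p-1)} (x). *)
Definition adword (n : nat) (x y : V) (w : {ffun 'I_n -> bool}) : V :=
  foldr (fun k acc => br (if w k then x else y) acc) x (enum 'I_n).

(* s_i(x,y): i s_i(x,y) is the coefficient of lambda^(i-1) in
   (ad_{lambda x + y})^(p-1)(x), i.e. the sum over words with exactly
   i-1 letters x. *)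
Definition s_term (p i : nat) (x y : V) : V :=
  (i%:R)^-1 *: \sum_(w : {ffun 'I_p.-1 -> bool} | #|[pred k | w k]| == i.-1)
     adword x y w.

Definition p2p_structure (even : pred V) (p : nat) (f : V -> V) : Prop :=
  [/\ (forall x, even x -> even (f x)),
      (forall (l : K) x, even x -> f (l *: x) = l ^+ p *: f x),
      (forall x y, even x -> even y ->
          f (x + y) = f x + f y + \sum_(1 <= i < p) s_term p i x y)
    & (forall x y, even x -> br (f x) y = iter p (br x) y)].
End P2P.

(* Realised on K^(m+2) = 'rV[K]_(m.+2): index 0 is x_0, index 1 is x_1,
   index k (2 <= k <= m+1) is y_(k-1). *)

Section K2m.
Variables (K : fieldType) (m : nat).

Definition K2m_e (k : 'I_(m.+2)) : 'rV[K]_(m.+2) := delta_mx 0 k.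
Definition K2m_x0 : 'rV[K]_(m.+2) := K2m_e (inord 0).
Definition K2m_x1 : 'rV[K]_(m.+2) := K2m_e (inord 1).
Definition K2m_y (i : nat) : 'rV[K]_(m.+2) := K2m_e (inord i.+1).

Definition K2m_bb (k l : 'I_(m.+2)) : 'rV[K]_(m.+2) :=
  let i := (k : nat).-1 in let j := (l : nat).-1 in
  if ((k : nat) == 0%N) && (2 <= l <= m)%N then K2m_y j.+1
  else if ((l : nat) == 0%N) && (2 <= k <= m)%N then - K2m_y i.+1
  else if (2 <= k)%N && (2 <= l)%N && (i + j == m)%N then
    (if (2 * i <= m)%N then (-1) ^+ ((m - 2 * i)./2) *: K2m_x1   (* [y_i,y_(m-i)], i <= m/2 *)
     else (-1) ^+ ((m - 2 * j)./2) *: K2m_x1)                    (* [y_(m-j),y_j], j <= m/2 *)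
  else 0.

Definition K2m_bracket (u v : 'rV[K]_(m.+2)) : 'rV[K]_(m.+2) :=
  \sum_(k < m.+2) \sum_(l < m.+2) (u 0 k * v 0 l) *: K2m_bb k l.

Definition K2m_even : pred 'rV[K]_(m.+2) :=
  fun v => [forall k : 'I_(m.+2), (2 <= k)%N ==> (v 0 k == 0)].
End K2m.

From HB Require Import structures.
From mathcomp Require Import all_boot all_order all_algebra zify ring.
Set Implicit Arguments. Unset Strict Implicit. Unset Printing Implicit Defensive.
Import GRing.Theory.
Local Open Scope ring_scope.

(* The even part span(x0, x1) is abelian and acts on the odd part only
   through x0, as the shift y_i |-> y_(i+1).  Hence every ad x with x even is
   nilpotent of order m, all the s_i vanish, and [x, y_1] is a multiple of y_2.
   If p < m, then (ad x0)^p y_1 = y_(p+1) cannot be [x0^[p], y_1].  If m <= p,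
   every (ad x)^p is zero, so each x^[p] lies in the centre K x1 of the even
   part, and the remaining axioms say that x |-> x^[p] is p-semilinear, which
   is consistent because Frobenius is additive. *)

Section K2m.
Variables (K : fieldType) (m : nat).
Notation VV := 'rV[K]_(m.+2).
Notation br := (@K2m_bracket K m).
Notation x0 := (K2m_x0 K m).
Notation x1 := (K2m_x1 K m).
Notation y := (K2m_y K m).

Lemma K2m_evenP (v : VV) :
  reflect (forall k : 'I_(m.+2), (2 <= k)%N -> v 0 k = 0) (K2m_even v).
Proof.
apply: (iffP forallP) => H k; first by move=> k2; apply/eqP; move: (H k); rewrite k2.
by apply/implyP => k2; rewrite H.
Qed.

Lemma K2m_eE (i : nat) :
  (i < m.+2)%N -> K2m_e K (inord i) = \row_(k < m.+2) (k == i :> nat)%:R.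
Proof. by move=> im; apply/rowP => k; rewrite /K2m_e !mxE eqxx /= -val_eqE /= inordK. Qed.

Lemma K2m_x0E : x0 = \row_k (k == 0%N :> nat)%:R.
Proof. exact: K2m_eE. Qed.

Lemma K2m_x1E : x1 = \row_k (k == 1%N :> nat)%:R.
Proof. exact: K2m_eE. Qed.

Lemma K2m_yE i : (i <= m)%N -> y i = \row_k (k == i.+1 :> nat)%:R.
Proof. by move=> im; apply: K2m_eE. Qed.

Lemma K2m_evenZ l (v : VV) : K2m_even v -> K2m_even (l *: v).
Proof. by move=> /K2m_evenP ev; apply/K2m_evenP => k k2; rewrite mxE ev ?mulr0. Qed.

Lemma K2m_evenD (u v : VV) : K2m_even u -> K2m_even v -> K2m_even (u + v).
Proof.
by move=> /K2m_evenP eu /K2m_evenP ev; apply/K2m_evenP => k k2; rewrite mxE eu ?ev ?addr0.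
Qed.

Lemma K2m_even_x0 : K2m_even x0.
Proof. by apply/K2m_evenP => -[[|[|k]] ?] //= _; rewrite K2m_x0E mxE. Qed.

Lemma K2m_even_x1 : K2m_even x1.
Proof. by apply/K2m_evenP => -[[|[|k]] ?] //= _; rewrite K2m_x1E mxE. Qed.

Lemma K2m_even_decomp (v : VV) :
  K2m_even v -> v = v 0 ord0 *: x0 + v 0 (inord 1) *: x1.
Proof.
move=> /K2m_evenP ev; apply/rowP => -[[|[|k]] km]; rewrite K2m_x0E K2m_x1E !mxE /=.
- by rewrite mulr1 mulr0 addr0; congr (v 0 _); apply: val_inj.
- by rewrite mulr1 mulr0 add0r; congr (v 0 _); apply: val_inj; rewrite /= inordK.
- by rewrite !mulr0 addr0 ev.
Qed.

(* Index l stands for y_(l-1): this is [x0, y_(l-1)] = y_l. *)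
Lemma K2m_bb_x0 (l j : 'I_(m.+2)) :
  K2m_bb K ord0 l 0 j = ((2 <= l <= m)%N && (j == l.+1 :> nat))%:R.
Proof.
rewrite /K2m_bb /=; case: ifP => [/andP[l2 lm] | _]; last by rewrite andbF mxE.
by rewrite prednK ?K2m_yE ?mxE // (leq_trans _ l2).
Qed.

Lemma K2m_bb_x1 (l : 'I_(m.+2)) : K2m_bb K (inord 1) l = 0.
Proof. by rewrite /K2m_bb inordK //= andbF. Qed.

Lemma K2m_bracket_even_coord (e v : VV) (j : 'I_(m.+2)) : K2m_even e ->
  br e v 0 j = if (3 <= j)%N then e 0 ord0 * v 0 (inord j.-1) else 0.
Proof.
move=> /K2m_evenP ev; rewrite /K2m_bracket (summxE (V:=K)).
rewrite (bigD1 ord0) //= [X in _ + X]big1 ?addr0; last first.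
  move=> k k0; rewrite summxE big1 // => l _; rewrite mxE.
  case: (ltnP 1 k) => k2; first by rewrite ev // !mul0r.
  have -> : k = inord 1.
    by apply: val_inj; rewrite /= inordK //; move: k0 k2; rewrite -(inj_eq val_inj) /=; lia.
  by rewrite K2m_bb_x1 mxE mulr0.
rewrite (summxE (V:=K)); under eq_bigr => l _ do rewrite mxE K2m_bb_x0.
case: ifP => j3; last first.
  rewrite big1 // => l _; case: andP => [[/andP[l2 _] /eqP jl]|_]; last by rewrite mulr0.
  by move: j3; rewrite jl ltnS l2.
have jm : (j.-1 < m.+2)%N by have := ltn_ord j; lia.
rewrite (bigD1 (inord j.-1)) //= inordK // big1 ?addr0.
  rewrite prednK ?eqxx ?andbT; last by lia.
  have -> : (1 < j.-1 <= m)%N by have := ltn_ord j; lia.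
  by rewrite mulr1.
move=> l lj; case: andP => [[_ /eqP jl]|_]; last by rewrite mulr0.
by move: lj; rewrite -(inj_eq val_inj) /= inordK // jl eqxx.
Qed.

Lemma K2m_bracket_even_y (e : VV) (i : nat) : K2m_even e -> (0 < i < m)%N ->
  br e (y i) = e 0 ord0 *: y i.+1.
Proof.
move=> ee /andP[i0 im]; apply/rowP => j.
rewrite K2m_bracket_even_coord // (K2m_yE (ltnW im)) (K2m_yE im) !mxE.
case: ifP => j3; last by rewrite (_ : (j == i.+2 :> nat) = false) ?mulr0 //; lia.
rewrite inordK; last by have := ltn_ord j; lia.
by have -> : (j.-1 == i.+1) = (j == i.+2 :> nat) by apply/eqP/eqP; lia.
Qed.

Lemma K2m_iter_bracket_x0_y (n i : nat) : (0 < i)%N -> (i + n <= m)%N ->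
  iter n (br x0) (y i) = y (i + n).
Proof.
move=> i0; elim: n => [|n IHn] inm; first by rewrite addn0.
rewrite iterS IHn ?K2m_bracket_even_y ?K2m_even_x0; try lia.
by rewrite K2m_x0E mxE scale1r addnS.
Qed.

Lemma K2m_iter_bracket_even_coord (e v : VV) n (j : 'I_(m.+2)) : K2m_even e ->
  iter n.+1 (br e) v 0 j =
  if (n.+3 <= j)%N then e 0 ord0 ^+ n.+1 * v 0 (inord (j - n.+1)) else 0.
Proof.
move=> ee; elim: n j => [|n IHn] j; first by rewrite K2m_bracket_even_coord // expr1 subn1.
rewrite iterS K2m_bracket_even_coord // IHn inordK; last by have := ltn_ord j; lia.
case: (ltnP n.+2 j.-1) => jn.
  have -> : (3 <= j)%N by lia.
  have -> : (n.+4 <= j)%N by lia.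
  by rewrite mulrA -exprS; congr (_ * v 0 (inord _)); lia.
by case: ifP; rewrite ?mulr0 //; case: ifP => //; lia.
Qed.

Lemma K2m_iter_bracket_even_eq0 (e v : VV) n : K2m_even e -> (0 < n)%N -> (m <= n)%N ->
  iter n (br e) v = 0.
Proof.
case: n => // n ee _ mn; apply/rowP => j.
by rewrite K2m_iter_bracket_even_coord // mxE; case: ifP => //; have := ltn_ord j; lia.
Qed.

Lemma K2m_bracket_even_even (e v : VV) : K2m_even e -> K2m_even v -> br e v = 0.
Proof.
move=> ee /K2m_evenP ev; apply/rowP => j; rewrite K2m_bracket_even_coord // mxE.
by case: ifP => // j3; rewrite ev ?mulr0 // inordK; have := ltn_ord j; lia.
Qed.

Lemma K2m_even0 : K2m_even (0 : VV).
Proof. by apply/K2m_evenP => k _; rewrite mxE. Qed.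

Lemma K2m_foldr_bracket_even n (F : 'I_n -> VV) (v : VV) (s : seq 'I_n) :
  (forall k, K2m_even (F k)) -> K2m_even v ->
  foldr (fun k acc => br (F k) acc) v s = if s is [::] then v else 0.
Proof.
move=> eF ev; elim: s => // a s /= ->.
by case: s => [|b s]; rewrite K2m_bracket_even_even ?K2m_even0.
Qed.

Lemma K2m_s_term_even (p i : nat) (u v : VV) : (1 < p)%N ->
  K2m_even u -> K2m_even v -> s_term br p i u v = 0.
Proof.
move=> p1 eu ev; rewrite /s_term big1 ?scaler0 // => w _.
rewrite /adword K2m_foldr_bracket_even //; last by move=> k; case: (w k).
by case E: (enum _) => //; move/(congr1 size): E; rewrite size_enum_ord /=; lia.
Qed.

Lemma K2m_sum_s_term_even (p : nat) (u v : VV) : K2m_even u -> K2m_even v ->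
  \sum_(1 <= i < p) s_term br p i u v = 0.
Proof.
move=> eu ev; rewrite big_nat big1 // => i /andP[i1 ip].
by apply: K2m_s_term_even => //; apply: leq_ltn_trans ip.
Qed.

Lemma K2m_no_p2p_structure (p : nat) (f : VV -> VV) :
  (2 < p)%N -> (p < m)%N -> ~ p2p_structure br (@K2m_even K m) p f.
Proof.
move=> p_gt2 pm [even_f _ _ ad_f]; have m_gt1 : (1 < m)%N by lia.
have := congr1 (fun v : VV => v 0 (inord p.+2)) (ad_f _ (y 1) K2m_even_x0).
rewrite K2m_bracket_even_y ?even_f ?K2m_even_x0 // K2m_iter_bracket_x0_y //= add1n.
rewrite !K2m_yE // !mxE inordK // eqxx (_ : (p.+2 == 3)%N = false); last lia.
by rewrite mulr0 => /eqP; rewrite eq_sym oner_eq0.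
Qed.

Lemma K2m_p2p_structure_central (p : nat) (f : VV -> VV) (x : VV) :
  (2 <= m)%N -> (m <= p)%N -> p2p_structure br (@K2m_even K m) p f -> K2m_even x ->
  f x = f x 0 (inord 1) *: x1.
Proof.
move=> m_ge2 m_le_p [even_f _ _ ad_f] ex; have efx := even_f x ex.
have : br (f x) (y 1) = 0 by rewrite ad_f // K2m_iter_bracket_even_eq0 //; lia.
rewrite K2m_bracket_even_y //.
move/rowP/(_ (inord 3)); rewrite K2m_yE // !mxE inordK // eqxx mulr1 => fx0.
by rewrite {1}(K2m_even_decomp efx) fx0 scale0r add0r.
Qed.

Lemma K2m_p2p_structureP (p : nat) (f : VV -> VV) :
  p \in [pchar K] -> (2 <= m)%N -> (m <= p)%N ->
  p2p_structure br (@K2m_even K m) p f <->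
  exists s1 s2 : K, forall a b : K,
    f (a *: x0 + b *: x1) = (a ^+ p * s1 + b ^+ p * s2) *: x1.
Proof.
move=> charK m_ge2 m_le_p; have e0 := K2m_even_x0; have e1 := K2m_even_x1.
split=> [pf | [s1 [s2 fE]]].
  move: (pf) => [_ fZ fD _]; have fE := K2m_p2p_structure_central m_ge2 m_le_p pf.
  exists (f x0 0 (inord 1)), (f x1 0 (inord 1)) => a b.
  rewrite fD ?K2m_evenZ // K2m_sum_s_term_even ?K2m_evenZ // addr0 !fZ //.
  by rewrite {1}(fE _ e0) {1}(fE _ e1) !scalerA -scalerDl.
pose c (v : VV) := v 0 ord0 ^+ p * s1 + v 0 (inord 1) ^+ p * s2.
have {}fE v : K2m_even v -> f v = c v *: x1 by move=> ev; rewrite {1}(K2m_even_decomp ev) fE.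
have frobD a b : (a + b) ^+ p = a ^+ p + b ^+ p :> K.
  by rewrite -!(pFrobenius_autE charK) rmorphD.
split=> [v ev | l v ev | u v eu ev | u v eu].
- by rewrite fE ?K2m_evenZ.
- by rewrite !fE ?K2m_evenZ // scalerA /c !mxE !exprMn; congr (_ *: _); ring.
- rewrite K2m_sum_s_term_even // addr0 !fE ?K2m_evenD // -scalerDl /c !mxE !frobD.
  by congr (_ *: _); ring.
rewrite fE // K2m_iter_bracket_even_eq0 //; last lia.
apply/rowP => j; rewrite K2m_bracket_even_coord ?K2m_evenZ // K2m_x1E !mxE /=.
by rewrite mulr0 mul0r if_same.
Qed.

End K2m.

Theorem mainTheorem13 (K : fieldType) (p m : nat) :
  p \in [pchar K] -> (2 < p)%N -> (2 <= m)%N -> ~~ odd m ->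
  ((exists f : 'rV[K]_(m.+2) -> 'rV[K]_(m.+2),
      p2p_structure (@K2m_bracket K m) (@K2m_even K m) p f) <-> (m <= p)%N) /\
  ((m <= p)%N ->
   forall f : 'rV[K]_(m.+2) -> 'rV[K]_(m.+2),
     p2p_structure (@K2m_bracket K m) (@K2m_even K m) p f <->
     exists s1 s2 : K, forall a b : K,
       f (a *: K2m_x0 K m + b *: K2m_x1 K m) =
       (a ^+ p * s1 + b ^+ p * s2) *: K2m_x1 K m).
Proof.
move=> charK p_gt2 m_ge2 _.
split; last by move=> mp f; apply: K2m_p2p_structureP.
split=> [[f pf] | mp].
  by case: (leqP m p) => // pm; case: (K2m_no_p2p_structure p_gt2 pm pf).
exists (fun _ => 0); apply/(K2m_p2p_structureP _ charK m_ge2 mp).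
by exists 0, 0 => a b; rewrite !mulr0 addr0 scale0r.
Qed.
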